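(* Let $(\mathbf{a}_1,\dots,\mathbf{a}_n)$ be symmetric second-order tensors on $\mathbb{R}^3$. Then: (1) the family is isotropic iff $\mathbf{a}_k'=0$ for all $1\le k\le n$; (2) it is transversely isotropic iff there exists $j$ with $\mathbf{a}_j'\neq0$, $\mathbf{a}_j\times\mathbf{a}_j^2=0$ and $\mathbf{a}_j\times\mathbf{a}_k=0$ for all $1\le k\le n$; (3) it is orthotropic iff $\operatorname{tr}(\mathbf{a}_k\times\mathbf{a}_l)=0$ for all $1\le k,l\le n$, and either there exists $j$ with $\mathbf{a}_j\times\mathbf{a}_j^2\neq0$ or there exists a pair $(i,j)$ with $\mathbf{a}_i\times\mathbf{a}_j\neq0$; (4) it is monoclinic iff there exists a pair $(i,j)$ such that $\boldsymbol{\omega}:=\operatorname{tr}(\mathbf{a}_i\times\mathbf{a}_j)\neq0$ and $(\mathbf{a}_k\boldsymbol{\omega})\times\boldsymbol{\omega}=0$ for all $1\le k\le n$.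
   Context: $SO(3)$ acts on tensors by $(g\star\mathbf{T})(x_1,\dots,x_m)=\mathbf{T}(g^{-1}x_1,\dots,g^{-1}x_m)$. Symmetry group of a family: intersection of $\{g: g\star\mathbf{a}_k=\mathbf{a}_k\}$; symmetry class: its conjugacy class in $SO(3)$. Isotropic $=[SO(3)]$, transversely isotropic $=[O(2)]$, orthotropic $=[\mathbb{D}_2]$, monoclinic $=[\mathbb{Z}_2]$ ($O(2)$: rotations about the $z$-axis together with the rotation by $\pi$ about the $x$-axis; $\mathbb{D}_2$: identity and rotations by $\pi$ about the coordinate axes; $\mathbb{Z}_2$: identity and a rotation by $\pi$). $\mathbf{a}'=\mathbf{a}-\frac13\operatorname{tr}(\mathbf{a})\mathbf{q}$ ($\mathbf{q}$ the identity tensor), $\mathbf{a}^2$ the matrix square, $\mathbf{a}_k\boldsymbol{\omega}$ matrix-vector product. For totally symmetric tensors $\mathbf{S}^1$ of order $p$ and $\mathbf{S}^2$ of order $q$ (vectors being order 1), $\mathbf{S}^1\times\mathbf{S}^2$ is the order $p+q-1$ totally symmetric tensor obtained by totally symmetrizing $\varepsilon_{i_1jk}S^1_{ji_2\cdots i_p}S^2_{ki_{p+1}\cdots i_{p+q-1}}$ ($\varepsilon$ Levi-Civita); for vectors it is the usual cross product. $\operatorname{tr}$ of a totally symmetric tensor is the contraction of two of its indices. *)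

From HB Require Import structures.
From mathcomp Require Import all_boot all_order all_algebra.
From mathcomp Require Import reals.
Set Implicit Arguments. Unset Strict Implicit. Unset Printing Implicit Defensive.
Import Order.TTheory GRing.Theory Num.Theory.
Local Open Scope ring_scope.

Section Defs.
Variable R : realType.

Definition mx3 (l : seq (seq R)) : 'M[R]_3 :=
  \matrix_(i < 3, j < 3) nth 0 (nth [::] l i) j.

Definition SO3 (g : 'M[R]_3) : Prop := g^T *m g = 1%:M /\ \det g = 1.

Definition Rz (c s : R) : 'M[R]_3 := mx3 [:: [:: c; -s; 0]; [:: s; c; 0]; [:: 0; 0; 1]].
Definition Rxpi : 'M[R]_3 := mx3 [:: [:: 1; 0; 0]; [:: 0; -1; 0]; [:: 0; 0; -1]].
Definition Rypi : 'M[R]_3 := mx3 [:: [:: -1; 0; 0]; [:: 0; 1; 0]; [:: 0; 0; -1]].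
Definition Rzpi : 'M[R]_3 := mx3 [:: [:: -1; 0; 0]; [:: 0; -1; 0]; [:: 0; 0; 1]].

Definition O2grp (m : 'M[R]_3) : Prop :=
  exists c s : R, c ^+ 2 + s ^+ 2 = 1 /\ (m = Rz c s \/ m = Rz c s *m Rxpi).
Definition D2grp (m : 'M[R]_3) : Prop :=
  m = 1%:M \/ m = Rxpi \/ m = Rypi \/ m = Rzpi.
Definition Z2grp (m : 'M[R]_3) : Prop := m = 1%:M \/ m = Rzpi.

(* action on a second-order tensor: (g*a)(x,y) = a(g^-1 x, g^-1 y), i.e. g a g^T *)
Definition act2 (g a : 'M[R]_3) : 'M[R]_3 := g *m a *m g^T.

Definition sym_group n (a : 'I_n -> 'M[R]_3) (g : 'M[R]_3) : Prop :=
  SO3 g /\ forall k, act2 g (a k) = a k.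

Definition conj_class (G H : 'M[R]_3 -> Prop) : Prop :=
  exists g, SO3 g /\ forall m, G m <-> H (g^T *m m *m g).

Definition isotropic n (a : 'I_n -> 'M[R]_3) := conj_class (sym_group a) SO3.
Definition transv_isotropic n (a : 'I_n -> 'M[R]_3) := conj_class (sym_group a) O2grp.
Definition orthotropic n (a : 'I_n -> 'M[R]_3) := conj_class (sym_group a) D2grp.
Definition monoclinic n (a : 'I_n -> 'M[R]_3) := conj_class (sym_group a) Z2grp.

Definition eps (i j k : 'I_3) : R :=
  ((((j : nat)%:Z - (i : nat)%:Z) * ((k : nat)%:Z - (i : nat)%:Z)
     * ((k : nat)%:Z - (j : nat)%:Z))%:~R) / 2.

Definition vec := 'I_3 -> R.
Definition tensor3 := 'I_3 -> 'I_3 -> 'I_3 -> R.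
Definition zero3 : tensor3 := fun _ _ _ => 0.
Definition zerov : vec := fun _ => 0.

Definition sym3 (T : tensor3) : tensor3 := fun i j k =>
  (T i j k + T i k j + T j i k + T j k i + T k i j + T k j i) / 6.

Definition cross22 (a b : 'M[R]_3) : tensor3 :=
  sym3 (fun i1 i2 i3 => \sum_(j < 3) \sum_(k < 3) eps i1 j k * a j i2 * b k i3).

Definition tr3 (T : tensor3) : vec := fun i => \sum_(j < 3) T i j j.

Definition crossv (u v : vec) : vec := fun i =>
  \sum_(j < 3) \sum_(k < 3) eps i j k * u j * v k.

Definition matvec (a : 'M[R]_3) (w : vec) : vec := fun i => \sum_(j < 3) a i j * w j.

Definition dev (a : 'M[R]_3) : 'M[R]_3 := a - (\tr a / 3) *: 1%:M.

End Defs.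

From HB Require Import structures.
From mathcomp Require Import all_boot all_order all_algebra.
From mathcomp Require Import reals polyrcf ring lra.
From Stdlib Require Import FunctionalExtensionality Classical.
Import Order.TTheory GRing.Theory Num.Theory.
Local Open Scope ring_scope.
Set Implicit Arguments. Unset Strict Implicit. Unset Printing Implicit Defensive.

(* Every condition is invariant under conjugating the family by a rotation, so it can be checked
   on a normal form of the family.  For symmetric [a], [b] the
   commutator [a b - b a] is [-3] times the skew matrix of [tr (a x b)], so [tr (a x b) = 0] iff
   [a] and [b] commute, and [tr (a x b)] is an axis fixed by every rotation fixing [a] and [b].
   Next, [a x b] is the coefficient tensor of the cubic form [v . (a v) x (b v)]; for diagonal
   [a], [b] it vanishes iff the eigenvalue triples of [a], [b] and [(1, 1, 1)] are linearly
   dependent.  Diagonalising a suitable member of the family, each symmetry class is then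
   identified by computing the rotations that commute with one or two diagonal or block-diagonal
   matrices: all of SO(3) for scalars, O(2) for diag(al, al, be) with [al <> be], D2 for two
   diagonal matrices with independent eigenvalue triples, and Z2 for two non-commuting
   block-diagonal matrices.  Conversely, when a condition fails, an explicit quarter-turn or
   half-turn outside the expected group fixes the whole family. *)

Notation i0 := (@Ordinal 3 0 isT).
Notation i1 := (@Ordinal 3 1 isT).
Notation i2 := (@Ordinal 3 2 isT).

Section Tensors.
Variable R : realType.
Implicit Types (a b c d g h m : 'M[R]_3) (x y u v w : vec R).

Lemma sum3E (F : 'I_3 -> R) : \sum_(i < 3) F i = F i0 + F i1 + F i2.
Proof.
by rewrite !big_ord_recr big_ord0 /= add0r; congr (_ + _ + _); congr F; apply: val_inj.
Qed.

Lemma ord3P (i : 'I_3) : [\/ i = i0, i = i1 | i = i2].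
Proof.
by case: i => [[|[|[|//]]]] ?; [apply: Or31 | apply: Or32 | apply: Or33]; apply: val_inj.
Qed.

Lemma mx3_ext a b :
  a i0 i0 = b i0 i0 -> a i0 i1 = b i0 i1 -> a i0 i2 = b i0 i2 ->
  a i1 i0 = b i1 i0 -> a i1 i1 = b i1 i1 -> a i1 i2 = b i1 i2 ->
  a i2 i0 = b i2 i0 -> a i2 i1 = b i2 i1 -> a i2 i2 = b i2 i2 -> a = b.
Proof. by move=> *; apply/matrixP => i j; case: (ord3P i) => ->; case: (ord3P j) => ->. Qed.

Lemma vec_ext x y : x i0 = y i0 -> x i1 = y i1 -> x i2 = y i2 -> x = y.
Proof. by move=> *; apply: functional_extensionality => i; case: (ord3P i) => ->. Qed.

Lemma tensor3_ext (T U : tensor3 R) : (forall p q r, T p q r = U p q r) -> T = U.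
Proof.
by move=> TU; do 3![apply: functional_extensionality => ?]; apply: TU.
Qed.

Lemma crossv_x x y : crossv x y i0 = x i1 * y i2 - x i2 * y i1.
Proof. by rewrite /crossv !sum3E /eps /=; field. Qed.
Lemma crossv_y x y : crossv x y i1 = x i2 * y i0 - x i0 * y i2.
Proof. by rewrite /crossv !sum3E /eps /=; field. Qed.
Lemma crossv_z x y : crossv x y i2 = x i0 * y i1 - x i1 * y i0.
Proof. by rewrite /crossv !sum3E /eps /=; field. Qed.

Lemma cross22E a b p q r :
  cross22 a b p q r = sym3 (fun i q r => crossv (a^~ q) (b^~ r) i) p q r.
Proof. by []. Qed.

Definition dotv x y := \sum_(i < 3) x i * y i.

Definition det3 a := a i0 i0 * (a i1 i1 * a i2 i2 - a i1 i2 * a i2 i1)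
  - a i0 i1 * (a i1 i0 * a i2 i2 - a i1 i2 * a i2 i0)
  + a i0 i2 * (a i1 i0 * a i2 i1 - a i1 i1 * a i2 i0).

Lemma det3E a : \det a = det3 a.
Proof.
rewrite (expand_det_row _ i0) sum3E /cofactor !(expand_det_row _ ord0).
rewrite !big_ord_recr big_ord0 /= !add0r /cofactor !det_mx11 !mxE !big_ord0 /det3.
pose ent (i j : nat) := a (inord i) (inord j).
have entE (i j : 'I_3) : a i j = ent i j by rewrite /ent !inord_val.
by rewrite !entE /=; ring.
Qed.

Ltac simp_mx := rewrite ?(mxE, sum3E) /=.
Ltac simp_vec := rewrite /matvec /dotv /zerov ?(crossv_x, crossv_y, crossv_z, mxE, sum3E) /=.
Ltac simp_cross := rewrite /zero3 ?cross22E /sym3 /= ?(crossv_x, crossv_y, crossv_z) /=.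

(** * Rotations and their action on tensors *)

Lemma SO3_mulmxT g : SO3 g -> g *m g^T = 1%:M.
Proof. by case=> gTg _; apply: mulmx1C. Qed.

Lemma SO3_tr g : SO3 g -> SO3 g^T.
Proof. by move=> gSO; split; [rewrite trmxK SO3_mulmxT | rewrite det_tr; case: gSO]. Qed.

Lemma SO3_mul g h : SO3 g -> SO3 h -> SO3 (g *m h).
Proof.
move=> [gTg detg] [hTh deth]; split; last by rewrite det_mulmx detg deth mulr1.
by rewrite trmx_mul mulmxA -(mulmxA h^T) gTg mulmx1 hTh.
Qed.

Lemma SO3_1 : SO3 (1%:M : 'M[R]_3).
Proof. by split; [rewrite trmx1 mulmx1 | rewrite det1]. Qed.

Lemma act2_1 a : act2 1%:M a = a.
Proof. by rewrite /act2 trmx1 mul1mx mulmx1. Qed.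

Lemma act2M g h a : act2 (g *m h) a = act2 g (act2 h a).
Proof. by rewrite /act2 trmx_mul !mulmxA. Qed.

Lemma act2_tr g a : (act2 g a)^T = act2 g a^T.
Proof. by rewrite /act2 !trmx_mul trmxK mulmxA. Qed.

Lemma act2B g a b : act2 g (a - b) = act2 g a - act2 g b.
Proof. by rewrite /act2 mulmxBr mulmxBl. Qed.

Lemma act2Z g (k : R) a : act2 g (k *: a) = k *: act2 g a.
Proof. by rewrite /act2 -scalemxAr -scalemxAl. Qed.

Lemma act2K g : SO3 g -> cancel (act2 g) (act2 g^T).
Proof. by move=> [gTg _] a; rewrite /act2 trmxK !mulmxA gTg mul1mx -mulmxA gTg mulmx1. Qed.

Lemma act2Kt g : SO3 g -> cancel (act2 g^T) (act2 g).
Proof. by move=> /SO3_tr/act2K; rewrite trmxK. Qed.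

Lemma act2_inj g : SO3 g -> injective (act2 g).
Proof. by move=> /act2K /can_inj. Qed.

Lemma act2_mul g a b : SO3 g -> act2 g a *m act2 g b = act2 g (a *m b).
Proof. by move=> [gTg _]; rewrite /act2 !mulmxA -(mulmxA _ g^T) gTg mulmx1. Qed.

Lemma act2_comm g a b : SO3 g -> a *m b = b *m a -> act2 g a *m act2 g b = act2 g b *m act2 g a.
Proof. by move=> gSO ab; rewrite !act2_mul // ab. Qed.

Lemma act2_fixE m a : SO3 m -> (act2 m a = a <-> m *m a = a *m m).
Proof.
move=> mSO; split=> [fixa|ma].
  by rewrite -[in RHS]fixa /act2 -!mulmxA; case: mSO => -> _; rewrite mulmx1.
by rewrite /act2 ma -mulmxA SO3_mulmxT // mulmx1.
Qed.

Lemma act2_scalar g (k : R) : SO3 g -> act2 g (k *: 1%:M) = k *: 1%:M.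
Proof. by move=> gSO; rewrite act2Z /act2 mulmx1 SO3_mulmxT. Qed.

Lemma dev_act2 g a : SO3 g -> dev (act2 g a) = act2 g (dev a).
Proof.
move=> gSO; have tr_act2 : \tr (act2 g a) = \tr a.
  by rewrite /act2 mxtrace_mulC mulmxA; case: gSO => -> _; rewrite mul1mx.
by rewrite /dev act2B act2_scalar // tr_act2.
Qed.

Lemma dev_act2_eq0 g a : SO3 g -> (dev (act2 g a) = 0 <-> dev a = 0).
Proof.
move=> gSO; rewrite dev_act2 //; split=> [|->]; last by rewrite /act2 mulmx0 mul0mx.
by rewrite -{1}[0](act2Kt gSO) => /(act2_inj gSO) ->; rewrite /act2 mulmx0 mul0mx.
Qed.

Lemma matvec_mul a b x : matvec (a *m b) x = matvec a (matvec b x).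
Proof. by apply: vec_ext; simp_vec; ring. Qed.

Lemma matvec1 x : matvec 1%:M x = x.
Proof. by apply: vec_ext; simp_vec; ring. Qed.

Lemma matvec0 a : matvec a (zerov R) = zerov R.
Proof. by apply: vec_ext; simp_vec; ring. Qed.

Lemma matvecZ a (k : R) x : matvec a (fun i => k * x i) = (fun i => k * matvec a x i).
Proof. by apply: functional_extensionality => i; simp_vec; ring. Qed.

Lemma matvecK g x : SO3 g -> matvec g^T (matvec g x) = x.
Proof. by case=> gTg _; rewrite -matvec_mul gTg matvec1. Qed.

Lemma matvec_SO3_eq0 g x : SO3 g -> (matvec g x = zerov R <-> x = zerov R).
Proof.
by move=> gSO; split=> [gx0|->]; [rewrite -(matvecK x gSO) gx0 matvec0 | rewrite matvec0].
Qed.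

Lemma matvec_act2 g a x : SO3 g -> matvec (act2 g a) (matvec g x) = matvec g (matvec a x).
Proof. by move=> gSO; rewrite !matvec_mul matvecK. Qed.

Lemma dotv_tr g x y : dotv x (matvec g y) = dotv (matvec g^T x) y.
Proof. by simp_vec; ring. Qed.

(* [cofmx g = g] for a rotation is Cramer's rule. *)
Definition cofmx g : 'M[R]_3 := mx3
  [:: [:: g i1 i1 * g i2 i2 - g i1 i2 * g i2 i1; g i1 i2 * g i2 i0 - g i1 i0 * g i2 i2;
          g i1 i0 * g i2 i1 - g i1 i1 * g i2 i0];
      [:: g i2 i1 * g i0 i2 - g i2 i2 * g i0 i1; g i2 i2 * g i0 i0 - g i2 i0 * g i0 i2;
          g i2 i0 * g i0 i1 - g i2 i1 * g i0 i0];
      [:: g i0 i1 * g i1 i2 - g i0 i2 * g i1 i1; g i0 i2 * g i1 i0 - g i0 i0 * g i1 i2;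
          g i0 i0 * g i1 i1 - g i0 i1 * g i1 i0]].

Lemma cofmx_SO3 g : SO3 g -> cofmx g = g.
Proof.
move=> [gTg detg]; have cofmxT : cofmx g *m g^T = (det3 g)%:M.
  by apply: mx3_ext; rewrite /cofmx /mx3; simp_mx; rewrite /det3; ring.
by rewrite -[cofmx g]mulmx1 -gTg mulmxA cofmxT -det3E detg mul1mx.
Qed.

Lemma crossv_SO3 g x y : SO3 g ->
  crossv (matvec g x) (matvec g y) = matvec g (crossv x y).
Proof.
move=> /cofmx_SO3 {3}<-.
by apply: vec_ext; rewrite /cofmx /mx3; simp_vec; ring.
Qed.

(** * The tensors [a x b] and [tr (a x b)] *)

Definition vec3 (x0 x1 x2 : R) : vec R := fun i => nth 0 [:: x0; x1; x2] i.

(* The cubic form with coefficient tensor [cross22 a b]. *)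
Definition cross_form a b x := dotv x (crossv (matvec a x) (matvec b x)).

Lemma cross_formE a b x : cross_form a b x =
  cross22 a b i0 i0 i0 * (x i0 * x i0 * x i0) + cross22 a b i1 i1 i1 * (x i1 * x i1 * x i1)
  + cross22 a b i2 i2 i2 * (x i2 * x i2 * x i2)
  + 3 * (cross22 a b i0 i0 i1 * (x i0 * x i0 * x i1) + cross22 a b i0 i0 i2 * (x i0 * x i0 * x i2)
       + cross22 a b i0 i1 i1 * (x i0 * x i1 * x i1) + cross22 a b i0 i2 i2 * (x i0 * x i2 * x i2)
       + cross22 a b i1 i1 i2 * (x i1 * x i1 * x i2) + cross22 a b i1 i2 i2 * (x i1 * x i2 * x i2))
  + 6 * (cross22 a b i0 i1 i2 * (x i0 * x i1 * x i2)).
Proof. by rewrite /cross_form; simp_vec; simp_cross; field. Qed.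

Lemma cross22C12 a b p q r : cross22 a b p q r = cross22 a b q p r.
Proof. by rewrite /cross22 /sym3; ring. Qed.

Lemma cross22C23 a b p q r : cross22 a b p q r = cross22 a b p r q.
Proof. by rewrite /cross22 /sym3; ring. Qed.

Lemma cross22_eq0P a b : cross22 a b = zero3 R <-> forall x, cross_form a b x = 0.
Proof.
split=> [ab0 x|form0]; first by rewrite cross_formE ab0 /zero3; ring.
have pt (t0 t1 t2 : R) := form0 (vec3 t0 t1 t2).
(* The ten coefficients are recovered from ten values of the cubic form. *)
move: (pt 1 0 0) (pt 0 1 0) (pt 0 0 1) (pt 1 1 0) (pt 1 (-1) 0) (pt 1 0 1) (pt 1 0 (-1))
  (pt 0 1 1) (pt 0 1 (-1)) (pt 1 1 1); rewrite !cross_formE /vec3 /= => *.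
have c000 : cross22 a b i0 i0 i0 = 0 by lra.
have c111 : cross22 a b i1 i1 i1 = 0 by lra.
have c222 : cross22 a b i2 i2 i2 = 0 by lra.
have c001 : cross22 a b i0 i0 i1 = 0 by lra.
have c011 : cross22 a b i0 i1 i1 = 0 by lra.
have c002 : cross22 a b i0 i0 i2 = 0 by lra.
have c022 : cross22 a b i0 i2 i2 = 0 by lra.
have c112 : cross22 a b i1 i1 i2 = 0 by lra.
have c122 : cross22 a b i1 i2 i2 = 0 by lra.
have c012 : cross22 a b i0 i1 i2 = 0 by lra.
apply: tensor3_ext => p q r.
case: (ord3P p) => ->; case: (ord3P q) => ->; case: (ord3P r) => ->;
  first [ done | rewrite cross22C12; done | rewrite cross22C23; done
        | rewrite cross22C12 cross22C23; done | rewrite cross22C23 cross22C12; done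
        | rewrite cross22C12 cross22C23 cross22C12; done ].
Qed.


Lemma cross_form_act2 g a b x : SO3 g ->
  cross_form (act2 g a) (act2 g b) x = cross_form a b (matvec g^T x).
Proof.
by move=> gSO; rewrite /cross_form /act2 !matvec_mul crossv_SO3 // dotv_tr.
Qed.

Lemma cross22_act2_eq0 g a b : SO3 g ->
  cross22 (act2 g a) (act2 g b) = zero3 R <-> cross22 a b = zero3 R.
Proof.
move=> gSO; rewrite !cross22_eq0P; split=> form0 x; last by rewrite cross_form_act2.
by rewrite -(matvecK x gSO) -cross_form_act2.
Qed.

Lemma symE a : a^T = a -> [/\ a i1 i0 = a i0 i1, a i2 i0 = a i0 i2 & a i2 i1 = a i1 i2].
Proof. by move=> aT; split; rewrite -{1}aT mxE. Qed.

(* [skew w] is the matrix of [x |-> w x x]. *)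
Definition skew w : 'M[R]_3 :=
  mx3 [:: [:: 0; - w i2; w i1]; [:: w i2; 0; - w i0]; [:: - w i1; w i0; 0]].

Lemma skew_inj : injective skew.
Proof.
move=> w w' /matrixP ww'; apply: vec_ext.
- by have := ww' i2 i1; rewrite !mxE.
- by have := ww' i0 i2; rewrite !mxE.
- by have := ww' i1 i0; rewrite !mxE.
Qed.

Lemma skew0 : skew (zerov R) = 0.
Proof. by apply: mx3_ext; rewrite /skew /mx3 /zerov; simp_mx; rewrite ?oppr0. Qed.

Lemma act2_skew g w : SO3 g -> act2 g (skew w) = skew (matvec g w).
Proof.
move=> /cofmx_SO3 {2}<-.
by apply: mx3_ext; rewrite /act2 /skew /cofmx /mx3 /matvec; simp_mx; ring.
Qed.

Lemma commutator_skew a b : a^T = a -> b^T = b ->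
  a *m b - b *m a = (-3) *: skew (tr3 (cross22 a b)).
Proof.
move=> /symE [a10 a20 a21] /symE [b10 b20 b21].
apply: mx3_ext; rewrite /skew /mx3 /tr3; simp_mx; simp_cross;
  by rewrite ?a10 ?a20 ?a21 ?b10 ?b20 ?b21; field.
Qed.

Lemma tr3_cross22_act2 g a b : SO3 g -> a^T = a -> b^T = b ->
  tr3 (cross22 (act2 g a) (act2 g b)) = matvec g (tr3 (cross22 a b)).
Proof.
move=> gSO aT bT; apply: skew_inj; apply: (@scalerI _ _ (-3)).
  by rewrite oppr_eq0 pnatr_eq0.
rewrite -act2_skew // -act2Z -!commutator_skew ?act2_tr ?aT ?bT //.
by rewrite act2B !act2_mul.
Qed.

Lemma tr3_cross22_eq0P a b : a^T = a -> b^T = b ->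
  tr3 (cross22 a b) = zerov R <-> a *m b = b *m a.
Proof.
move=> aT bT; split=> [w0|ab].
  by apply/eqP; rewrite -subr_eq0 commutator_skew // w0 skew0 scaler0.
apply: skew_inj; apply: (@scalerI _ _ (-3)); first by rewrite oppr_eq0 pnatr_eq0.
by rewrite -commutator_skew // ab subrr skew0 scaler0.
Qed.

(** * Diagonalisation of symmetric tensors *)

Definition diag3 (x y z : R) : 'M[R]_3 := mx3 [:: [:: x; 0; 0]; [:: 0; y; 0]; [:: 0; 0; z]].

Lemma diag3M (x y z x' y' z' : R) :
  diag3 x y z *m diag3 x' y' z' = diag3 (x * x') (y * y') (z * z').
Proof. by apply: mx3_ext; rewrite /diag3 /mx3; simp_mx; ring. Qed.

Definition e3 : vec R := vec3 0 0 1.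

Lemma lincomb2_eq (e f x y kx ky : R) : x = 0 -> y = 0 -> e - f = kx * x + ky * y -> e = f.
Proof. by move=> -> ->; rewrite !mulr0 addr0 => /eqP; rewrite subr_eq0 => /eqP. Qed.

(* [Rz (-q) p] times the rotation about the x-axis with cosine [z] and sine [r]; its last
   column is [(p r, q r, z)]. *)
Definition sph_rot (p q r z : R) : 'M[R]_3 :=
  mx3 [:: [:: - q; - p * z; p * r]; [:: p; - q * z; q * r]; [:: 0; r; z]].

Lemma sph_rot_SO3 (p q r z : R) :
  p ^+ 2 + q ^+ 2 = 1 -> r ^+ 2 + z ^+ 2 = 1 -> SO3 (sph_rot p q r z).
Proof.
move=> /eqP; rewrite -subr_eq0 => /eqP pq1 /eqP; rewrite -subr_eq0 => /eqP rz1.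
split; last first.
  rewrite det3E /det3 /sph_rot /mx3; simp_mx.
  by apply: (lincomb2_eq (kx := r ^+ 2 + z ^+ 2) (ky := 1) pq1 rz1); ring.
apply: mx3_ext; rewrite /sph_rot /mx3; simp_mx; try ring.
- by apply: (lincomb2_eq (kx := 1) (ky := 0) pq1 rz1); ring.
- by apply: (lincomb2_eq (kx := z ^+ 2) (ky := 1) pq1 rz1); ring.
- by apply: (lincomb2_eq (kx := - z * r) (ky := 0) pq1 rz1); ring.
- by apply: (lincomb2_eq (kx := - z * r) (ky := 0) pq1 rz1); ring.
- by apply: (lincomb2_eq (kx := r ^+ 2) (ky := 1) pq1 rz1); ring.
Qed.

Lemma sph_rot_e3 (p q r z : R) : matvec (sph_rot p q r z) e3 = vec3 (p * r) (q * r) z.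
Proof. by apply: vec_ext; rewrite /sph_rot /mx3 /e3 /vec3; simp_vec; ring. Qed.

Lemma rotation_e3_to_unit u : dotv u u = 1 -> exists g, SO3 g /\ matvec g e3 = u.
Proof.
move=> uu; have u2 : (u i0 ^+ 2 + u i1 ^+ 2) + u i2 ^+ 2 = 1 by rewrite -uu; simp_vec; ring.
have [h0|h0] := eqVneq (u i0 ^+ 2 + u i1 ^+ 2) 0.
  have u0 : u i0 = 0 by nra.
  have u1 : u i1 = 0 by nra.
  exists (sph_rot 1 0 0 (u i2)); split.
    by apply: sph_rot_SO3; [ring | rewrite -u2 h0; ring].
  by rewrite sph_rot_e3; apply: vec_ext; rewrite /vec3 /= ?u0 ?u1; ring.
have hpos : 0 < u i0 ^+ 2 + u i1 ^+ 2 by rewrite lt_def h0 addr_ge0 ?sqr_ge0.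
set r := Num.sqrt (u i0 ^+ 2 + u i1 ^+ 2).
have r0 : r != 0 by rewrite lt0r_neq0 // sqrtr_gt0.
have r2 : r ^+ 2 = u i0 ^+ 2 + u i1 ^+ 2 by rewrite sqr_sqrtr // ltW.
exists (sph_rot (u i0 / r) (u i1 / r) r (u i2)); split.
  apply: sph_rot_SO3; last by rewrite r2.
  by rewrite !expr_div_n -mulrDl -r2 divff // expf_neq0.
by rewrite sph_rot_e3; apply: vec_ext; rewrite /vec3 /= ?divfK.
Qed.

Lemma dotv_gt0 x : x <> zerov R -> 0 < dotv x x.
Proof.
move=> x0; rewrite /dotv sum3E -!expr2.
have := sqr_ge0 (x i0); have := sqr_ge0 (x i1); have := sqr_ge0 (x i2) => h2 h1 h0.
rewrite lt_def; apply/andP; split; last by lra.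
apply/eqP => sum0; apply: x0.
by apply: vec_ext; apply/eqP; rewrite -sqrf_eq0; apply/eqP; rewrite /zerov; lra.
Qed.

Definition normalize x : vec R := fun i => (Num.sqrt (dotv x x))^-1 * x i.

Lemma normalize_unit x : x <> zerov R -> dotv (normalize x) (normalize x) = 1.
Proof.
move=> /dotv_gt0 xx; rewrite /normalize; set r := Num.sqrt (dotv x x).
have r0 : r != 0 by rewrite lt0r_neq0 // sqrtr_gt0.
have r2 : r ^+ 2 = dotv x x by rewrite sqr_sqrtr // ltW.
have -> : dotv (fun i => r^-1 * x i) (fun i => r^-1 * x i) = dotv x x / r ^+ 2.
  by rewrite /dotv !sum3E; field.
by rewrite r2 divff // lt0r_neq0.
Qed.

Lemma sym_eigenvector a : a^T = a ->
  exists (l : R) u, dotv u u = 1 /\ matvec a u = (fun i => l * u i).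
Proof.
move=> aT; have [l rootl] : {l | root (char_poly a) l}.
  by apply: odd_poly_root; rewrite size_char_poly.
have /eigenvalueP [v va v0] : eigenvalue a l by rewrite eigenvalue_root_char.
pose y : vec R := fun i => v 0 i.
have y0 : y <> zerov R.
  move=> y0; move/eqP: v0; apply; apply/rowP => i; rewrite mxE.
  exact: (congr1 (fun f => f i) y0).
exists l, (normalize y); split; first exact: normalize_unit.
rewrite /normalize matvecZ; apply: functional_extensionality => i.
have -> : matvec a y i = l * y i.
  have := congr1 (fun M : 'rV[R]_3 => M 0 i) va; rewrite !mxE => <-.
  by rewrite /matvec; apply: eq_bigr => j _; rewrite mulrC -{1}aT mxE.
by rewrite mulrCA.
Qed.

Lemma Rz_SO3 (c s : R) : c ^+ 2 + s ^+ 2 = 1 -> SO3 (Rz c s).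
Proof.
move=> cs1; have -> : Rz c s = sph_rot s (- c) 0 1.
  by apply: mx3_ext; rewrite /Rz /sph_rot /mx3; simp_mx; ring.
by apply: sph_rot_SO3; [rewrite -cs1; ring | ring].
Qed.

(* [e3] is an eigenvector of [d]; for symmetric [d], the block form diag(2 x 2, 1 x 1). *)
Definition e3_block d := d i0 i2 = 0 /\ d i1 i2 = 0.

Lemma eigen_e3_block g a (l : R) : SO3 g -> a^T = a ->
  matvec a (matvec g e3) = (fun i => l * matvec g e3 i) ->
  (act2 g^T a)^T = act2 g^T a /\ e3_block (act2 g^T a).
Proof.
move=> gSO aT ae; split; first by rewrite act2_tr aT.
have be3 : matvec (act2 g^T a) e3 = (fun i => l * e3 i).
  by rewrite -{1}(matvecK e3 gSO) (matvec_act2 a _ (SO3_tr gSO)) ae matvecZ matvecK.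
have entry i : act2 g^T a i i2 = l * e3 i.
  by have := congr1 (fun f => f i) be3; rewrite /matvec sum3E /e3 /vec3 /= !mulr0 mulr1 !add0r.
by split; rewrite entry /e3 /vec3 /= mulr0.
Qed.

Lemma rotation_angle (p q r : R) : exists c s : R,
  c ^+ 2 + s ^+ 2 = 1 /\ q * (c ^+ 2 - s ^+ 2) + c * s * (r - p) = 0.
Proof.
have [->|q0] := eqVneq q 0; first by exists 1, 0; split; ring.
(* [(q, l - p)] is an eigenvector of [[p, q], [q, r]] for the eigenvalue [l]. *)
pose l := (p + r) / 2 + Num.sqrt (((p - r) / 2) ^+ 2 + q ^+ 2).
have hl : (l - p) * (l - r) = q ^+ 2.
  rewrite (_ : _ * _ = Num.sqrt (((p - r) / 2) ^+ 2 + q ^+ 2) ^+ 2 - ((p - r) / 2) ^+ 2).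
    by rewrite sqr_sqrtr ?addr_ge0 ?sqr_ge0 // addrC addKr.
  by rewrite /l; field.
pose nn := Num.sqrt (q ^+ 2 + (l - p) ^+ 2).
have nn2 : nn ^+ 2 = q ^+ 2 + (l - p) ^+ 2 by rewrite sqr_sqrtr ?addr_ge0 ?sqr_ge0.
have nn0 : nn != 0.
  have q2 : 0 < q ^+ 2 by rewrite lt_def sqr_ge0 andbT expf_neq0.
  apply/eqP => nn0; move: nn2; rewrite nn0 expr0n /=; have := sqr_ge0 (l - p); lra.
exists (q / nn), ((l - p) / nn); split; first by rewrite !expr_div_n -mulrDl -nn2 divff ?expf_neq0.
have -> : q * ((q / nn) ^+ 2 - ((l - p) / nn) ^+ 2) + q / nn * ((l - p) / nn) * (r - p)
   = q * (q ^+ 2 - (l - p) * (l - r)) / nn ^+ 2 by field.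
by rewrite hl subrr mulr0 mul0r.
Qed.

Lemma block_diagonalize b : b^T = b -> e3_block b ->
  exists c s : R, c ^+ 2 + s ^+ 2 = 1 /\
    exists x y z : R, b = act2 (Rz c s) (diag3 x y z).
Proof.
move=> bT [b02 b12]; have [b10 b20 b21] := symE bT.
have [c [s [cs1 angle]]] := rotation_angle (b i0 i0) (b i0 i1) (b i1 i1).
exists c, s; split => //; set d := act2 (Rz c s)^T b.
exists (d i0 i0), (d i1 i1), (b i2 i2).
have RzSO := Rz_SO3 cs1; apply: (act2_inj (SO3_tr RzSO)); rewrite (act2K RzSO) -/d.
apply: mx3_ext; rewrite /diag3 /mx3 !mxE //= /d /act2 /Rz /mx3; simp_mx;
  rewrite ?b10 ?b20 ?b21 ?b02 ?b12; try ring; by apply: (eq_trans _ angle); ring.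
Qed.

Lemma diagonalize a : a^T = a ->
  exists g (x y z : R), SO3 g /\ a = act2 g (diag3 x y z).
Proof.
move=> aT; have [l [u [uu au]]] := sym_eigenvector aT.
have [g [gSO ge3]] := rotation_e3_to_unit uu.
have := @eigen_e3_block g a l gSO aT; rewrite ge3 => /(_ au) [bT bblock].
have [c [s [cs1 [x [y [z bE]]]]]] := block_diagonalize bT bblock.
exists (g *m Rz c s), x, y, z; split; first by apply: SO3_mul => //; apply: Rz_SO3.
by rewrite act2M -bE act2Kt.
Qed.

(** * Symmetry groups of families *)

Section Family.
Variable n : nat.

Definition iso_cond (a : 'I_n -> 'M[R]_3) := forall k, dev (a k) = 0.

Definition transv_iso_cond (a : 'I_n -> 'M[R]_3) :=
  exists j, dev (a j) <> 0 /\
  cross22 (a j) (a j *m a j) = zero3 R /\ forall k, cross22 (a j) (a k) = zero3 R.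

Definition ortho_cond (a : 'I_n -> 'M[R]_3) :=
  (forall k l, tr3 (cross22 (a k) (a l)) = zerov R) /\
  ((exists j, cross22 (a j) (a j *m a j) <> zero3 R) \/
   (exists i j, cross22 (a i) (a j) <> zero3 R)).

Definition mono_cond (a : 'I_n -> 'M[R]_3) :=
  exists i j, let w := tr3 (cross22 (a i) (a j)) in
  w <> zerov R /\ forall k, crossv (matvec (a k) w) w = zerov R.

Lemma act2_famKt g (a : 'I_n -> 'M[R]_3) : SO3 g -> act2 g \o (act2 g^T \o a) = a.
Proof. by move=> gSO; apply: functional_extensionality => k /=; rewrite act2Kt. Qed.

Lemma transv_iso_cond_act2 g (a : 'I_n -> 'M[R]_3) : SO3 g ->
  transv_iso_cond a -> transv_iso_cond (act2 g \o a).
Proof.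
move=> gSO [j [devj [cjj cjk]]]; exists j => /=; split; first by rewrite dev_act2_eq0.
by split=> [|k]; rewrite ?act2_mul // cross22_act2_eq0.
Qed.

Lemma ortho_cond_act2 g (a : 'I_n -> 'M[R]_3) : SO3 g -> (forall k, (a k)^T = a k) ->
  ortho_cond a -> ortho_cond (act2 g \o a).
Proof.
move=> gSO aT [tr0 [[j cjj]|[i [j cij]]]]; split=> [k l|] /=.
- by rewrite tr3_cross22_act2 // tr0 matvec0.
- by left; exists j; rewrite act2_mul // cross22_act2_eq0.
- by rewrite tr3_cross22_act2 // tr0 matvec0.
- by right; exists i, j; rewrite cross22_act2_eq0.
Qed.

Lemma mono_cond_act2 g (a : 'I_n -> 'M[R]_3) : SO3 g -> (forall k, (a k)^T = a k) ->
  mono_cond a -> mono_cond (act2 g \o a).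
Proof.
move=> gSO aT [i [j /= [w0 eigw]]]; exists i, j => /=.
rewrite tr3_cross22_act2 // matvec_SO3_eq0 //; split=> // k.
by rewrite matvec_act2 // crossv_SO3 // eigw matvec0.
Qed.

Lemma sym_group_conj g (a : 'I_n -> 'M[R]_3) m : SO3 g ->
  sym_group a m <-> sym_group (act2 g^T \o a) (g^T *m m *m g).
Proof.
move=> gSO; have gTSO := SO3_tr gSO.
split=> [[mSO fixa]|[mSO fixb]].
  split=> [|k /=]; first by apply: SO3_mul => //; apply: SO3_mul.
  by rewrite !act2M act2Kt // fixa.
split=> [|k].
  have := SO3_mul (SO3_mul gSO mSO) gTSO.
  by rewrite !mulmxA SO3_mulmxT // mul1mx -mulmxA SO3_mulmxT // mulmx1.
by apply: (act2_inj gTSO); have := fixb k; rewrite /= !act2M act2Kt.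
Qed.

Lemma conj_classP (a : 'I_n -> 'M[R]_3) (H : 'M[R]_3 -> Prop) : conj_class (sym_group a) H <->
  exists g, SO3 g /\ forall m, sym_group (act2 g^T \o a) m <-> H m.
Proof.
split=> [[g [gSO symH]]|[g [gSO symH]]]; exists g; split=> // m; last first.
  by rewrite (sym_group_conj _ _ gSO) symH.
have mE : g^T *m (g *m m *m g^T) *m g = m by have := act2K gSO m; rewrite /act2 trmxK.
by rewrite -{1}mE -sym_group_conj // symH mE.
Qed.

End Family.

(** * Isotropy and transverse isotropy *)

Definition Rx90 : 'M[R]_3 := mx3 [:: [:: 1; 0; 0]; [:: 0; 0; -1]; [:: 0; 1; 0]].
Definition Rz90 : 'M[R]_3 := Rz 0 1.

Ltac SO3_concrete :=
  split; [apply: mx3_ext; rewrite /mx3; simp_mx; ring | rewrite det3E /det3 /mx3; simp_mx; ring].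

Lemma Rx90_SO3 : SO3 Rx90. Proof. by rewrite /Rx90; SO3_concrete. Qed.
Lemma Rz90_SO3 : SO3 Rz90. Proof. by rewrite /Rz90 /Rz; SO3_concrete. Qed.
Lemma Rxpi_SO3 : SO3 (Rxpi R). Proof. by rewrite /Rxpi; SO3_concrete. Qed.

Lemma eq0_of_multiple (p q k : R) : p = k * q -> q = 0 -> p = 0.
Proof. by move=> -> ->; rewrite mulr0. Qed.

Ltac by_multiple H :=
  first [ by apply: (eq0_of_multiple (k := 1) _ H); field
        | by apply: (eq0_of_multiple (k := -1) _ H); field
        | by apply: (eq0_of_multiple (k := 3) _ H); field
        | by apply: (eq0_of_multiple (k := -3) _ H); field
        | by apply: (eq0_of_multiple (k := 6) _ H); field
        | by apply: (eq0_of_multiple (k := -6) _ H); field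
        | by apply: (eq0_of_multiple (k := 6^-1) _ H); field
        | by apply: (eq0_of_multiple (k := - 6^-1) _ H); field ].

(* The determinant with rows [(1, 1, 1)], [(x0, x1, x2)] and [(y0, y1, y2)]. *)
Definition ddet (x0 x1 x2 y0 y1 y2 : R) :=
  x0 * y1 - x1 * y0 + x1 * y2 - x2 * y1 + x2 * y0 - x0 * y2.

Lemma cross22_diag3_eq0 (x0 x1 x2 y0 y1 y2 : R) :
  cross22 (diag3 x0 x1 x2) (diag3 y0 y1 y2) = zero3 R <-> ddet x0 x1 x2 y0 y1 y2 = 0.
Proof.
split=> [c0|d0].
  have := congr1 (fun T => T i0 i1 i2) c0; rewrite /diag3 /mx3; simp_cross; simp_mx => c012.
  by rewrite /ddet; by_multiple c012.
rewrite /ddet in d0; apply: tensor3_ext => p q r.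
by case: (ord3P p) => ->; case: (ord3P q) => ->; case: (ord3P r) => ->;
  rewrite /diag3 /mx3; simp_cross; simp_mx; first [ring | by_multiple d0].
Qed.

Lemma dev_diag3_eq0 (x y z : R) : dev (diag3 x y z) = 0 <-> x = y /\ y = z.
Proof.
split=> [/matrixP dev0|[-> ->]].
  have := dev0 i0 i0; have := dev0 i1 i1; rewrite /dev /mxtrace /diag3 /mx3; simp_mx.
  by move=> d11 d00; split; lra.
by apply: mx3_ext; rewrite /dev /mxtrace /diag3 /mx3; simp_mx; field.
Qed.

Lemma dev_eq0_scalar c : dev c = 0 -> c = (\tr c / 3) *: 1%:M.
Proof. by move/eqP; rewrite subr_eq0 => /eqP. Qed.

Lemma fix_Rz90_Rx90_dev d : d^T = d -> act2 Rz90 d = d -> act2 Rx90 d = d -> dev d = 0.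
Proof.
move=> /symE [d10 d20 d21] /matrixP fixz /matrixP fixx.
have := fixz i0 i0; have := fixz i0 i1; have := fixz i0 i2; have := fixz i1 i2;
have := fixx i1 i1; have := fixx i1 i2; have := fixx i0 i1.
rewrite /act2 /Rz90 /Rz /Rx90 /mx3; simp_mx; rewrite ?d10 ?d20 ?d21 => *.
by apply: mx3_ext; rewrite /dev /mxtrace; simp_mx; rewrite ?d10 ?d20 ?d21; lra.
Qed.

Lemma isotropicP n (a : 'I_n -> 'M[R]_3) : (forall k, (a k)^T = a k) ->
  isotropic a <-> iso_cond a.
Proof.
move=> aT; split=> [[g [gSO symH]] k|dev0].
  have fix_all m : SO3 m -> act2 m (a k) = a k.
    move=> mSO; apply: (proj2 ((symH m).2 _)).
    by apply: SO3_mul => //; apply: SO3_mul => //; apply: SO3_tr.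
  by apply: fix_Rz90_Rx90_dev; [exact: aT | exact: fix_all Rz90_SO3 | exact: fix_all Rx90_SO3].
exists 1%:M; split=> [|m]; first exact: SO3_1.
rewrite trmx1 mul1mx mulmx1; split=> [[]//|mSO]; split=> // k.
by rewrite (dev_eq0_scalar (dev0 k)) act2_scalar.
Qed.

Lemma diag3_tr (x y z : R) : (diag3 x y z)^T = diag3 x y z.
Proof. by apply: mx3_ext; rewrite /diag3 /mx3; simp_mx. Qed.

Lemma fix_Rz90_uniaxial d : d^T = d -> act2 Rz90 d = d ->
  d = diag3 (d i0 i0) (d i0 i0) (d i2 i2).
Proof.
move=> /symE [d10 d20 d21] /matrixP fixz.
have := fixz i0 i0; have := fixz i0 i1; have := fixz i0 i2; have := fixz i1 i2.
rewrite /act2 /Rz90 /Rz /mx3; simp_mx; rewrite ?d10 ?d20 ?d21 => *.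
by apply: mx3_ext; rewrite /diag3 /mx3; simp_mx; rewrite ?d10 ?d20 ?d21; lra.
Qed.

Lemma Rz_fix_uniaxial (c s x z : R) : c ^+ 2 + s ^+ 2 = 1 ->
  act2 (Rz c s) (diag3 x x z) = diag3 x x z.
Proof.
move=> /eqP; rewrite -subr_eq0 => /eqP cs1.
by apply: mx3_ext; rewrite /act2 /diag3 /Rz /mx3; simp_mx;
  first [ring | apply: (lincomb2_eq (kx := x) (ky := 0) cs1 cs1); ring].
Qed.

Lemma Rxpi_fix_diag3 (x y z : R) : act2 (Rxpi R) (diag3 x y z) = diag3 x y z.
Proof. by apply: mx3_ext; rewrite /act2 /Rxpi /diag3 /mx3; simp_mx; ring. Qed.

Lemma O2grp_fix m : O2grp m -> SO3 m /\ forall x z : R, act2 m (diag3 x x z) = diag3 x x z.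
Proof.
move=> [c [s [cs1 [->|->]]]]; split=> [|x z].
- exact: Rz_SO3.
- exact: Rz_fix_uniaxial.
- by apply: SO3_mul; [apply: Rz_SO3 | apply: Rxpi_SO3].
- by rewrite act2M Rxpi_fix_diag3 Rz_fix_uniaxial.
Qed.

Lemma commute_uniaxial_block c (al be : R) :
  c *m diag3 al al be = diag3 al al be *m c -> al != be -> e3_block c.
Proof.
move=> /matrixP cD ne; have nz t : t * (be - al) = 0 -> t = 0.
  by move/eqP; rewrite mulf_eq0 subr_eq0 [be == _]eq_sym (negPf ne) orbF => /eqP.
by split; apply: nz; [have := cD i0 i2 | have := cD i1 i2];
  rewrite /diag3 /mx3; simp_mx => cDij; rewrite mulrBr; lra.
Qed.

Lemma sqr_add_eq0 (x y : R) : x ^+ 2 + y ^+ 2 = 0 -> x = 0 /\ y = 0.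
Proof.
by move/eqP; rewrite paddr_eq0 ?sqr_ge0 // !sqrf_eq0 => /andP [/eqP -> /eqP ->].
Qed.

Lemma block_SO3_O2 m : SO3 m -> e3_block m -> e3_block m^T -> O2grp m.
Proof.
move=> [/matrixP mTm detm] [m02 m12]; rewrite /e3_block !mxE => -[m20 m21].
have := mTm i0 i0; have := mTm i1 i1; have := mTm i0 i1; have := mTm i2 i2.
simp_mx; rewrite m02 m12 m20 m21 => e22 e01 e11 e00.
move: detm; rewrite det3E /det3 m02 m12 m20 m21 => detm.
have cs1 : m i0 i0 ^+ 2 + m i1 i0 ^+ 2 = 1 by rewrite !expr2; lra.
have /eqP : m i2 i2 ^+ 2 = 1 by rewrite expr2; lra.
rewrite sqrf_eq1 => /orP [/eqP m22 | /eqP m22]; rewrite m22 in detm;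
  exists (m i0 i0), (m i1 i0); split => //.
  have [d0 s0] : m i0 i0 - m i1 i1 = 0 /\ m i0 i1 + m i1 i0 = 0 by apply: sqr_add_eq0; nra.
  by left; apply: mx3_ext; rewrite /Rz /mx3; simp_mx; rewrite ?m02 ?m12 ?m20 ?m21 ?m22; lra.
have [d0 s0] : m i0 i0 + m i1 i1 = 0 /\ m i0 i1 - m i1 i0 = 0 by apply: sqr_add_eq0; nra.
by right; apply: mx3_ext; rewrite /Rz /Rxpi /mx3; simp_mx; rewrite ?m02 ?m12 ?m20 ?m21 ?m22; lra.
Qed.

Lemma commute_uniaxial_O2 m (al be : R) : SO3 m ->
  m *m diag3 al al be = diag3 al al be *m m -> al != be -> O2grp m.
Proof.
move=> mSO mD ne; apply: block_SO3_O2 => //; apply: (commute_uniaxial_block _ ne) => //.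
by rewrite -[diag3 _ _ _]diag3_tr -!trmx_mul mD.
Qed.

Lemma cross22_uniaxial (al be : R) d : al != be -> d^T = d ->
  cross22 (diag3 al al be) d = zero3 R -> d = diag3 (d i0 i0) (d i0 i0) (d i2 i2).
Proof.
move=> ne /symE [d10 d20 d21] c0.
have nz t : (be - al) * t = 0 -> t = 0.
  by move/eqP; rewrite mulf_eq0 subr_eq0 [be == _]eq_sym (negPf ne) => /eqP.
have entry p q r : cross22 (diag3 al al be) d p q r = 0 by rewrite c0.
move: (entry i0 i0 i2) (entry i1 i2 i2) (entry i0 i2 i2) (entry i0 i1 i2).
rewrite /diag3 /mx3; simp_cross; simp_mx; rewrite ?d10 ?d20 ?d21 => e002 e122 e022 e012.
have d01 : d i0 i1 = 0 by apply: nz; by_multiple e002.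
have d02 : d i0 i2 = 0 by apply: nz; by_multiple e122.
have d12 : d i1 i2 = 0 by apply: nz; by_multiple e022.
have d11 : d i0 i0 - d i1 i1 = 0 by apply: nz; by_multiple e012.
by apply: mx3_ext; rewrite /diag3 /mx3; simp_mx; rewrite ?d10 ?d20 ?d21 ?d01 ?d02 ?d12 //; lra.
Qed.

Definition Pc : 'M[R]_3 := mx3 [:: [:: 0; 0; 1]; [:: 1; 0; 0]; [:: 0; 1; 0]].

Lemma Pc_SO3 : SO3 Pc. Proof. by rewrite /Pc; SO3_concrete. Qed.

Lemma act2_Pc (x y z : R) : act2 Pc (diag3 x y z) = diag3 z x y.
Proof. by apply: mx3_ext; rewrite /act2 /Pc /diag3 /mx3; simp_mx; ring. Qed.

Lemma act2_PcT (x y z : R) : act2 Pc^T (diag3 x y z) = diag3 y z x.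
Proof. by apply: mx3_ext; rewrite /act2 /Pc /diag3 /mx3; simp_mx; ring. Qed.

Lemma uniaxial_form c : c^T = c -> dev c <> 0 -> cross22 c (c *m c) = zero3 R ->
  exists g (al be : R), [/\ SO3 g, al != be & c = act2 g (diag3 al al be)].
Proof.
move=> cT devc ccc; have [g [x [y [z [gSO cE]]]]] := diagonalize cT.
have devD : dev (diag3 x y z) <> 0 by rewrite -(dev_act2_eq0 _ gSO) -cE.
have /eqP : (x - y) * (y - z) * (z - x) = 0.
  move: ccc; rewrite cE act2_mul // cross22_act2_eq0 // diag3M cross22_diag3_eq0 /ddet => d0.
  by_multiple d0.
rewrite !mulf_eq0 !subr_eq0 => /orP[/orP[/eqP xy|/eqP yz]|/eqP zx].
- exists g, x, z; split=> //; last by rewrite cE xy.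
  by apply/eqP => xz; apply/devD/dev_diag3_eq0; split; lra.
- exists (g *m Pc), y, x; split; first by apply: SO3_mul => //; apply: Pc_SO3.
    by apply/eqP => yx; apply/devD/dev_diag3_eq0; split; lra.
  by rewrite act2M act2_Pc cE yz.
- exists (g *m Pc^T), x, y; split; first by apply: SO3_mul => //; apply/SO3_tr/Pc_SO3.
    by apply/eqP => xy; apply/devD/dev_diag3_eq0; split; lra.
  by rewrite act2M act2_PcT cE zx.
Qed.

Lemma Rz90_O2 : O2grp Rz90.
Proof. by exists 0, 1; split; [ring | left]. Qed.

Lemma Rx90_notO2 : ~ O2grp Rx90.
Proof.
by move=> [c [s [_ [/matrixP/(_ i2 i2) | /matrixP/(_ i2 i2)]]]];
  rewrite /Rx90 /Rz /Rxpi /mx3; simp_mx; lra.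
Qed.

Lemma transv_isotropicP n (a : 'I_n -> 'M[R]_3) : (forall k, (a k)^T = a k) ->
  transv_isotropic a <-> transv_iso_cond a.
Proof.
move=> aT; split=> [/conj_classP [g [gSO symH]]|[j [devj [cjj cjk]]]].
  rewrite -(act2_famKt a gSO); apply: transv_iso_cond_act2 => //.
  set b := act2 g^T \o a; have bT k : (b k)^T = b k by rewrite /= act2_tr aT.
  have bE k : b k = diag3 (b k i0 i0) (b k i0 i0) (b k i2 i2).
    by apply: fix_Rz90_uniaxial => //; apply: (proj2 ((symH _).2 Rz90_O2)).
  have [/existsP [j bj]|/existsPn all_eq] := boolP [exists j, b j i0 i0 != b j i2 i2].
    exists j; rewrite (bE j); split; first by move/dev_diag3_eq0 => [_]; apply/eqP.
    split=> [|k]; first by rewrite diag3M cross22_diag3_eq0 /ddet; ring.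
    by rewrite (bE k) cross22_diag3_eq0 /ddet; ring.
  exfalso; apply: Rx90_notO2; apply/symH; split=> [|k]; first exact: Rx90_SO3.
  rewrite -/b; have /dev_eq0_scalar -> : dev (b k) = 0.
    by rewrite (bE k) dev_diag3_eq0; have /negPn/eqP := all_eq k.
  exact/act2_scalar/Rx90_SO3.
have [g [al [be [gSO ne aj]]]] := uniaxial_form (aT j) devj cjj.
apply/conj_classP; exists g; split=> // m; set b := act2 g^T \o a.
have bj : b j = diag3 al al be by rewrite /b /= aj act2K.
have bE k : b k = diag3 (b k i0 i0) (b k i0 i0) (b k i2 i2).
  apply: (cross22_uniaxial ne); first by rewrite /b /= act2_tr aT.
  by rewrite -bj /b /= (cross22_act2_eq0 _ _ (SO3_tr gSO)).
split=> [[mSO fixb]|/O2grp_fix [mSO fixm]].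
  by apply: (commute_uniaxial_O2 mSO _ ne); rewrite -bj; apply/act2_fixE.
by split=> // k; rewrite bE fixm -bE.
Qed.

(** * Orthotropy *)

Definition Ry90 : 'M[R]_3 := mx3 [:: [:: 0; 0; 1]; [:: 0; 1; 0]; [:: -1; 0; 0]].

Lemma Ry90_SO3 : SO3 Ry90. Proof. by rewrite /Ry90; SO3_concrete. Qed.
Lemma Rypi_SO3 : SO3 (Rypi R). Proof. by rewrite /Rypi; SO3_concrete. Qed.
Lemma Rzpi_SO3 : SO3 (Rzpi R). Proof. by rewrite /Rzpi; SO3_concrete. Qed.

Lemma fix_Rxpi_Rypi_diag d : d^T = d -> act2 (Rxpi R) d = d -> act2 (Rypi R) d = d ->
  d = diag3 (d i0 i0) (d i1 i1) (d i2 i2).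
Proof.
move=> /symE [d10 d20 d21] /matrixP fixx /matrixP fixy.
have := fixx i0 i1; have := fixx i0 i2; have := fixy i1 i2.
rewrite /act2 /Rxpi /Rypi /mx3; simp_mx; rewrite ?d10 ?d20 ?d21 => *.
by apply: mx3_ext; rewrite /diag3 /mx3; simp_mx; rewrite ?d10 ?d20 ?d21; lra.
Qed.

Lemma diag3_comm (x0 x1 x2 y0 y1 y2 : R) :
  diag3 x0 x1 x2 *m diag3 y0 y1 y2 = diag3 y0 y1 y2 *m diag3 x0 x1 x2.
Proof. by rewrite !diag3M [y0 * _]mulrC [y1 * _]mulrC [y2 * _]mulrC. Qed.

Lemma commute_diag3 c (x0 x1 x2 y0 y1 y2 : R) :
  c *m diag3 x0 x1 x2 = diag3 x0 x1 x2 *m c -> c *m diag3 y0 y1 y2 = diag3 y0 y1 y2 *m c ->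
  ddet x0 x1 x2 y0 y1 y2 != 0 -> c = diag3 (c i0 i0) (c i1 i1) (c i2 i2).
Proof.
move=> cx cy d0.
(* The commutators vanish; their [(p, q)] entries are [c p q] times a difference of entries,
   and [ddet] is a combination of two such differences. *)
have key p q (kx ky : R) : c p q * ddet x0 x1 x2 y0 y1 y2 =
    kx * (c *m diag3 x0 x1 x2 - diag3 x0 x1 x2 *m c) p q +
    ky * (c *m diag3 y0 y1 y2 - diag3 y0 y1 y2 *m c) p q -> c p q = 0.
  by rewrite cx cy !subrr !mxE !mulr0 addr0 => /eqP; rewrite mulf_eq0 (negPf d0) orbF => /eqP.
apply: mx3_ext; rewrite /diag3 /mx3 !mxE //=.
- by apply: (key _ _ (y2 - y0) (x0 - x2)); rewrite /ddet /diag3 /mx3; simp_mx; ring.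
- by apply: (key _ _ (y0 - y1) (x1 - x0)); rewrite /ddet /diag3 /mx3; simp_mx; ring.
- by apply: (key _ _ (y0 - y2) (x2 - x0)); rewrite /ddet /diag3 /mx3; simp_mx; ring.
- by apply: (key _ _ (y0 - y1) (x1 - x0)); rewrite /ddet /diag3 /mx3; simp_mx; ring.
- by apply: (key _ _ (y1 - y0) (x0 - x1)); rewrite /ddet /diag3 /mx3; simp_mx; ring.
- by apply: (key _ _ (y1 - y0) (x0 - x1)); rewrite /ddet /diag3 /mx3; simp_mx; ring.
Qed.

Lemma diag3_SO3_D2 (e0 e1 e2 : R) : SO3 (diag3 e0 e1 e2) -> D2grp (diag3 e0 e1 e2).
Proof.
move=> [/matrixP dTd]; rewrite det3E /det3.
have := dTd i0 i0; have := dTd i1 i1; have := dTd i2 i2.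
rewrite /D2grp /Rxpi /Rypi /Rzpi /diag3 /mx3; simp_mx => d22 d11 d00 det1.
have [s0 s1 s2] : [/\ e0 ^+ 2 == 1, e1 ^+ 2 == 1 & e2 ^+ 2 == 1].
  by split; apply/eqP; rewrite expr2; lra.
move: s0 s1 s2 det1; rewrite !sqrf_eq1.
case/orP=> /eqP->; case/orP=> /eqP->; case/orP=> /eqP-> det1; try (exfalso; lra);
  [left | right; left | right; right; left | right; right; right]; apply: mx3_ext; simp_mx; ring.
Qed.

Lemma commute_diag3_D2 m (x0 x1 x2 y0 y1 y2 : R) : SO3 m ->
  m *m diag3 x0 x1 x2 = diag3 x0 x1 x2 *m m -> m *m diag3 y0 y1 y2 = diag3 y0 y1 y2 *m m ->
  ddet x0 x1 x2 y0 y1 y2 != 0 -> D2grp m.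
Proof.
move=> mSO mx my d0; have mE := commute_diag3 mx my d0.
by rewrite mE in mSO *; apply: diag3_SO3_D2.
Qed.

Lemma D2grp_fix m : D2grp m ->
  SO3 m /\ forall x y z : R, act2 m (diag3 x y z) = diag3 x y z.
Proof.
case=> [->|[->|[->|->]]]; split; try exact: SO3_1; try exact: Rxpi_SO3;
  try exact: Rypi_SO3; try exact: Rzpi_SO3; move=> x y z;
  apply: mx3_ext; rewrite /act2 /diag3 /Rxpi /Rypi /Rzpi /mx3; simp_mx; ring.
Qed.

Lemma Rx90_fix_diag3 (x y : R) : act2 Rx90 (diag3 x y y) = diag3 x y y.
Proof. by apply: mx3_ext; rewrite /act2 /Rx90 /diag3 /mx3; simp_mx; ring. Qed.

Lemma Ry90_fix_diag3 (x y : R) : act2 Ry90 (diag3 x y x) = diag3 x y x.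
Proof. by apply: mx3_ext; rewrite /act2 /Ry90 /diag3 /mx3; simp_mx; ring. Qed.

Lemma Rz90_fix_diag3 (x z : R) : act2 Rz90 (diag3 x x z) = diag3 x x z.
Proof. by apply: Rz_fix_uniaxial; ring. Qed.

Lemma D2grp_offdiag m : D2grp m -> [/\ m i0 i1 = 0, m i0 i2 = 0 & m i1 i2 = 0].
Proof. by case=> [->|[->|[->|->]]]; rewrite /Rxpi /Rypi /Rzpi /mx3; simp_mx. Qed.

Lemma Rx90_notD2 : ~ D2grp Rx90.
Proof. by move/D2grp_offdiag => [_ _]; rewrite /Rx90 /mx3; simp_mx; lra. Qed.

Lemma Ry90_notD2 : ~ D2grp Ry90.
Proof. by move/D2grp_offdiag => [_ + _]; rewrite /Ry90 /mx3; simp_mx; lra. Qed.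

Lemma Rz90_notD2 : ~ D2grp Rz90.
Proof. by move/D2grp_offdiag => [+ _ _]; rewrite /Rz90 /Rz /mx3; simp_mx; lra. Qed.

Lemma diag_extra_symmetry n (x y z : 'I_n -> R) :
  (forall j, (x j - y j) * (y j - z j) * (z j - x j) = 0) ->
  (forall i j, ddet (x i) (y i) (z i) (x j) (y j) (z j) = 0) ->
  exists m, [/\ SO3 m, ~ D2grp m &
    forall k, act2 m (diag3 (x k) (y k) (z k)) = diag3 (x k) (y k) (z k)].
Proof.
move=> degen dep.
have [/existsP [j xyj]|/existsPn xy] := boolP [exists j, x j != y j]; last first.
  exists Rz90; split=> [||k]; [exact: Rz90_SO3 | exact: Rz90_notD2 |].
  by have /negPn/eqP -> := xy k; apply: Rz90_fix_diag3.
have /eqP := degen j; rewrite !mulf_eq0 !subr_eq0 (negPf xyj) /=.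
case/orP=> /eqP eqj; [exists Rx90 | exists Ry90]; split=> [||k].
- exact: Rx90_SO3.
- exact: Rx90_notD2.
- have /eqP := dep j k; rewrite (_ : ddet _ _ _ _ _ _ = (x j - y j) * (y k - z k)).
    by rewrite mulf_eq0 subr_eq0 (negPf xyj) subr_eq0 => /eqP ->; apply: Rx90_fix_diag3.
  by rewrite /ddet eqj; ring.
- exact: Ry90_SO3.
- exact: Ry90_notD2.
- have /eqP := dep j k; rewrite (_ : ddet _ _ _ _ _ _ = (y j - x j) * (z k - x k)).
    rewrite mulf_eq0 subr_eq0 eq_sym (negPf xyj) subr_eq0 => /eqP ->.
    exact: Ry90_fix_diag3.
  by rewrite /ddet eqj; ring.
Qed.

Lemma D2_stabilizer n (b : 'I_n -> 'M[R]_3) (x0 x1 x2 y0 y1 y2 : R) :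
  (forall k l, b k *m b l = b l *m b k) ->
  (forall c, (forall k, c *m b k = b k *m c) ->
    c *m diag3 x0 x1 x2 = diag3 x0 x1 x2 *m c /\ c *m diag3 y0 y1 y2 = diag3 y0 y1 y2 *m c) ->
  ddet x0 x1 x2 y0 y1 y2 != 0 -> forall m, sym_group b m <-> D2grp m.
Proof.
move=> bcomm commXY d0 m; split=> [[mSO fixm]|/D2grp_fix [mSO fixd]].
  have [mX mY] : m *m diag3 x0 x1 x2 = diag3 x0 x1 x2 *m m /\
                 m *m diag3 y0 y1 y2 = diag3 y0 y1 y2 *m m.
    by apply: commXY => k; apply/act2_fixE.
  exact: commute_diag3_D2 mSO mX mY d0.
split=> // k; have [bX bY] := commXY (b k) (bcomm k).
by rewrite (commute_diag3 bX bY d0) fixd.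
Qed.

Lemma cross22_dev0 c d : dev c = 0 -> cross22 c d = zero3 R.
Proof.
move=> /dev_eq0_scalar ->; apply/cross22_eq0P => x.
by rewrite /cross_form; simp_vec; ring.
Qed.

Lemma orthotropic_ortho_cond n (a : 'I_n -> 'M[R]_3) : (forall k, (a k)^T = a k) ->
  orthotropic a -> ortho_cond a.
Proof.
move=> aT /conj_classP [g [gSO symH]]; set b := act2 g^T \o a.
have bT k : (b k)^T = b k by rewrite /b /= act2_tr aT.
rewrite -(act2_famKt a gSO) -/b; apply: ortho_cond_act2 => //.
have fixb m k : D2grp m -> act2 m (b k) = b k by move=> /symH [_]; apply.
pose x k : R := b k i0 i0; pose y k : R := b k i1 i1; pose z k : R := b k i2 i2.
have bE k : b k = diag3 (x k) (y k) (z k).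
  by apply: fix_Rxpi_Rypi_diag; rewrite ?fixb //; [right; left | right; right; left].
split=> [k l|]; first by apply/tr3_cross22_eq0P; rewrite // (bE k) (bE l) diag3_comm.
have [[j cjj]|no_j] := classic (exists j, cross22 (b j) (b j *m b j) <> zero3 R).
  by left; exists j.
have [[i [j cij]]|no_ij] := classic (exists i j, cross22 (b i) (b j) <> zero3 R).
  by right; exists i, j.
exfalso.
have degen j : (x j - y j) * (y j - z j) * (z j - x j) = 0.
  have: cross22 (b j) (b j *m b j) = zero3 R by apply: NNPP => ne; apply: no_j; exists j.
  by rewrite (bE j) diag3M cross22_diag3_eq0 /ddet => d0; by_multiple d0.
have dep i j : ddet (x i) (y i) (z i) (x j) (y j) (z j) = 0.
  apply/cross22_diag3_eq0; rewrite -bE -bE.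
  by apply: NNPP => ne; apply: no_ij; exists i, j.
have [m [mSO notD2 fixm]] := diag_extra_symmetry degen dep.
by apply: notD2; apply/symH; split=> // k; rewrite -/b bE fixm.
Qed.

Lemma orthotropic_of_nonuniaxial n (a : 'I_n -> 'M[R]_3) j : (forall k, (a k)^T = a k) ->
  (forall k l, a k *m a l = a l *m a k) -> cross22 (a j) (a j *m a j) <> zero3 R ->
  orthotropic a.
Proof.
move=> aT acomm cjj; have [g [x [y [z [gSO ajE]]]]] := diagonalize (aT j).
apply/conj_classP; exists g; split=> //; set b := act2 g^T \o a.
have bj : b j = diag3 x y z by rewrite /b /= ajE act2K.
have bcomm k l : b k *m b l = b l *m b k by apply/act2_comm/acomm/SO3_tr.
apply: (D2_stabilizer (x0 := x) (x1 := y) (x2 := z) (y0 := x * x) (y1 := y * y) (y2 := z * z)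
  bcomm).
  move=> c cb; rewrite -diag3M -bj; split; first exact: cb.
  by rewrite mulmxA cb -mulmxA cb mulmxA.
apply/eqP => d0; apply: cjj; rewrite ajE act2_mul // cross22_act2_eq0 // diag3M.
exact/cross22_diag3_eq0.
Qed.

Lemma orthotropic_of_noncoaxial n (a : 'I_n -> 'M[R]_3) i j : (forall k, (a k)^T = a k) ->
  (forall k l, a k *m a l = a l *m a k) -> cross22 (a i) (a i *m a i) = zero3 R ->
  cross22 (a i) (a j) <> zero3 R -> orthotropic a.
Proof.
move=> aT acomm cii cij.
have devi : dev (a i) <> 0 by move/cross22_dev0 => ci0; apply: cij; apply: ci0.
have [g1 [al [be [g1SO ne aiE]]]] := uniaxial_form (aT i) devi cii.
set d := act2 g1^T (a j); have dT : d^T = d by rewrite act2_tr aT.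
have dblock : e3_block d.
  apply: (commute_uniaxial_block _ ne).
  by have := act2_comm (SO3_tr g1SO) (acomm j i); rewrite -/d aiE act2K.
have [u [v [uv1 [y0 [y1 [y2 dE]]]]]] := block_diagonalize dT dblock.
have RzSO := Rz_SO3 uv1; have gSO : SO3 (g1 *m Rz u v) by apply: SO3_mul.
apply/conj_classP; exists (g1 *m Rz u v); split=> //; set b := act2 _ \o a.
have bE k : b k = act2 (Rz u v)^T (act2 g1^T (a k)) by rewrite /b /= trmx_mul act2M.
have bi : b i = diag3 al al be.
  by rewrite bE aiE act2K // -{1}(Rz_fix_uniaxial al be uv1) act2K.
have bj : b j = diag3 y0 y1 y2 by rewrite bE -/d dE act2K.
have bcomm k l : b k *m b l = b l *m b k by apply/act2_comm/acomm/SO3_tr.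
apply: (D2_stabilizer (x0 := al) (x1 := al) (x2 := be) (y0 := y0) (y1 := y1) (y2 := y2) bcomm).
  by move=> c cb; rewrite -bi -bj; split; apply: cb.
apply/eqP => d0; apply: cij; apply/(cross22_act2_eq0 _ _ (SO3_tr gSO)).
by change (cross22 (b i) (b j) = zero3 R); rewrite bi bj; apply/cross22_diag3_eq0.
Qed.

Lemma orthotropicP n (a : 'I_n -> 'M[R]_3) : (forall k, (a k)^T = a k) ->
  orthotropic a <-> ortho_cond a.
Proof.
move=> aT; split=> [|[tr0 hyp]]; first exact: orthotropic_ortho_cond.
have acomm k l : a k *m a l = a l *m a k by apply/tr3_cross22_eq0P.
case: hyp => [[j cjj]|[i [j cij]]]; first exact: orthotropic_of_nonuniaxial cjj.
have [cii|cii] := classic (cross22 (a i) (a i *m a i) = zero3 R).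
  exact: orthotropic_of_noncoaxial cii cij.
exact: orthotropic_of_nonuniaxial cii.
Qed.

(** * Monoclinic symmetry *)

Lemma block_diag d : d^T = d -> e3_block d -> d i0 i1 = 0 ->
  d = diag3 (d i0 i0) (d i1 i1) (d i2 i2).
Proof.
move=> /symE [d10 d20 d21] [d02 d12] d01.
by apply: mx3_ext; rewrite /diag3 /mx3; simp_mx; rewrite ?d10 ?d20 ?d21.
Qed.

Lemma fix_Rzpi_block d : d^T = d -> act2 (Rzpi R) d = d -> e3_block d.
Proof.
move=> /symE [d10 d20 d21] /matrixP fixz.
have := fixz i0 i2; have := fixz i1 i2; rewrite /act2 /Rzpi /mx3; simp_mx => *.
by split; lra.
Qed.

Lemma Z2grp_fix m : Z2grp m -> SO3 m /\ forall d, d^T = d -> e3_block d -> act2 m d = d.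
Proof.
case=> ->; split=> [|d]; first exact: SO3_1.
- by rewrite act2_1.
- exact: Rzpi_SO3.
move=> /symE [d10 d20 d21] [d02 d12].
by apply: mx3_ext; rewrite /act2 /Rzpi /mx3; simp_mx; rewrite ?d10 ?d20 ?d21 ?d02 ?d12; ring.
Qed.

Lemma Rz_block (c s : R) d : e3_block d -> e3_block (act2 (Rz c s)^T d).
Proof. by move=> [d02 d12]; split; rewrite /act2 /Rz /mx3; simp_mx; rewrite d02 d12; ring. Qed.

(* [s = 0] means that [Rz c s] is the identity or the half-turn [Rzpi]. *)
Lemma Rz_commute_block (c s : R) d : d^T = d -> e3_block d -> act2 (Rz c s) d = d ->
  c ^+ 2 + s ^+ 2 = 1 -> s = 0 \/ d = diag3 (d i0 i0) (d i0 i0) (d i2 i2).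
Proof.
move=> dT dblk fixd cs1; have /matrixP comm := (act2_fixE d (Rz_SO3 cs1)).1 fixd.
have [->|s0] := eqVneq s 0; [by left | right].
have [d10 _ _] := symE dT.
have nz t : s * t = 0 -> t = 0 by move/eqP; rewrite mulf_eq0 (negPf s0) => /eqP.
have d01 : d i0 i1 = 0.
  by apply: nz; have := comm i0 i0; rewrite /Rz /mx3; simp_mx; rewrite ?d10 => e; lra.
have d11 : d i0 i0 - d i1 i1 = 0.
  by apply: nz; have := comm i0 i1; rewrite /Rz /mx3; simp_mx; rewrite ?d10 => e; lra.
by rewrite {1}(block_diag dT dblk d01) (_ : d i1 i1 = d i0 i0) //; lra.
Qed.

Lemma fix_e3_axis m w : SO3 m -> matvec m w = w -> w i0 = 0 -> w i1 = 0 -> w <> zerov R ->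
  exists c s : R, c ^+ 2 + s ^+ 2 = 1 /\ m = Rz c s.
Proof.
move=> mSO mw w0 w1 wn; have w2 : w i2 != 0.
  by apply/eqP => w2; apply: wn; apply: vec_ext; rewrite /zerov.
have nz t : t * w i2 = 0 -> t = 0 by move/eqP; rewrite mulf_eq0 (negPf w2) orbF => /eqP.
have := congr1 (fun f => f i0) mw; have := congr1 (fun f => f i1) mw.
have := congr1 (fun f => f i2) mw; rewrite /matvec !sum3E w0 w1 => e2 e1 e0.
have m02 : m i0 i2 = 0 by apply: nz; lra.
have m12 : m i1 i2 = 0 by apply: nz; lra.
have m22 : m i2 i2 = 1 by apply/eqP; rewrite -subr_eq0; apply/eqP/nz; lra.
have [m20 m21] : m i2 i0 = 0 /\ m i2 i1 = 0.
  apply: sqr_add_eq0; have /matrixP/(_ i2 i2) := SO3_mulmxT mSO.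
  by rewrite !mxE sum3E !mxE m22 /= => e; rewrite !expr2; lra.
have mTblk : e3_block m^T by rewrite /e3_block !mxE.
have [c [s [cs1 [mE|mE]]]] := block_SO3_O2 mSO (conj m02 m12) mTblk.
  by exists c, s.
by move: m22; rewrite mE /Rz /Rxpi /mx3; simp_mx; lra.
Qed.

Lemma tr3_cross22_blocks d1 d2 : d1^T = d1 -> d2^T = d2 -> e3_block d1 -> e3_block d2 ->
  tr3 (cross22 d1 d2) i0 = 0 /\ tr3 (cross22 d1 d2) i1 = 0.
Proof.
move=> /symE [a10 a20 a21] /symE [b10 b20 b21] [a02 a12] [b02 b12].
by split; rewrite /tr3 sum3E; simp_cross;
  rewrite ?a10 ?a20 ?a21 ?b10 ?b20 ?b21 ?a02 ?a12 ?b02 ?b12; field.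
Qed.

Lemma fix_noncommuting_blocks_Z2 m d1 d2 : SO3 m -> d1^T = d1 -> d2^T = d2 ->
  e3_block d1 -> e3_block d2 -> d1 *m d2 <> d2 *m d1 ->
  act2 m d1 = d1 -> act2 m d2 = d2 -> Z2grp m.
Proof.
move=> mSO d1T d2T d1blk d2blk d12 fix1 fix2.
have [w0 w1] := tr3_cross22_blocks d1T d2T d1blk d2blk.
have wn : tr3 (cross22 d1 d2) <> zerov R by move/(tr3_cross22_eq0P d1T d2T).
have mw : matvec m (tr3 (cross22 d1 d2)) = tr3 (cross22 d1 d2).
  by rewrite -tr3_cross22_act2 // fix1 fix2.
have [c [s [cs1 mE]]] := fix_e3_axis mSO mw w0 w1 wn.
rewrite mE in fix1 fix2; have s0 : s = 0.
  case: (Rz_commute_block d1T d1blk fix1 cs1) => // d1E.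
  case: (Rz_commute_block d2T d2blk fix2 cs1) => // d2E.
  by exfalso; apply: d12; rewrite d1E d2E diag3_comm.
have /eqP := cs1; rewrite s0 expr0n addr0 sqrf_eq1 => /orP [/eqP c1|/eqP c1]; rewrite mE c1 s0.
  by left; apply: mx3_ext; rewrite /Rz /mx3; simp_mx; rewrite ?oppr0.
by right; apply: mx3_ext; rewrite /Rz /Rzpi /mx3; simp_mx; rewrite ?oppr0.
Qed.

Lemma Z2_stabilizer n (b : 'I_n -> 'M[R]_3) i j : (forall k, (b k)^T = b k) ->
  (forall k, e3_block (b k)) -> b i *m b j <> b j *m b i ->
  forall m, sym_group b m <-> Z2grp m.
Proof.
move=> bT bblk bij m; split=> [[mSO fixb]|/Z2grp_fix [mSO fixm]].
  exact: fix_noncommuting_blocks_Z2 mSO (bT i) (bT j) (bblk i) (bblk j) bij (fixb i) (fixb j).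
by split=> // k; apply: fixm.
Qed.

Lemma Rz90_notZ2 : ~ Z2grp Rz90.
Proof. by case=> /matrixP/(_ i0 i1); rewrite /Rz90 /Rz /Rzpi /mx3; simp_mx; lra. Qed.

Lemma halfturn_notZ2 (c s : R) : ~ Z2grp (act2 (Rz c s) (Rxpi R)).
Proof. by case=> /matrixP/(_ i2 i2); rewrite /act2 /Rz /Rzpi /Rxpi /mx3; simp_mx; lra. Qed.

Lemma commute_diag3_01 c (x y z : R) :
  c *m diag3 x y z = diag3 x y z *m c -> x != y -> c i0 i1 = 0.
Proof.
move=> /matrixP/(_ i0 i1); rewrite /diag3 /mx3; simp_mx => cD ne.
have : c i0 i1 * (y - x) = 0 by lra.
by move/eqP; rewrite mulf_eq0 subr_eq0 [y == _]eq_sym (negPf ne) orbF => /eqP.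
Qed.

(* The witness is a quarter-turn about [e3], or a half-turn about an eigenvector of a member
   with a non-scalar 2 x 2 block. *)
Lemma block_extra_symmetry n (b : 'I_n -> 'M[R]_3) : (forall k, (b k)^T = b k) ->
  (forall k, e3_block (b k)) -> (forall k l, b k *m b l = b l *m b k) ->
  exists m, [/\ SO3 m, ~ Z2grp m & forall k, act2 m (b k) = b k].
Proof.
move=> bT bblk bcomm.
have [/existsP [l bl]|/existsPn unif] :=
  boolP [exists l, (b l i0 i1 != 0) || (b l i0 i0 != b l i1 i1)]; last first.
  exists Rz90; split=> [||k]; [exact: Rz90_SO3 | exact: Rz90_notZ2 |].
  move: (unif k); rewrite negb_or !negbK => /andP [/eqP b01 /eqP b11].
  by rewrite (block_diag (bT k) (bblk k) b01) b11 Rz90_fix_diag3.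
have [c [s [cs1 [x [y [z blE]]]]]] := block_diagonalize (bT l) (bblk l).
have RzSO := Rz_SO3 cs1.
have xy : x != y.
  apply/eqP => xy; move: bl; rewrite blE xy Rz_fix_uniaxial //.
  by rewrite /diag3 /mx3 !mxE /= !eqxx.
exists (act2 (Rz c s) (Rxpi R)); split=> [||k].
- by apply: SO3_mul; [apply: SO3_mul => //; apply: Rxpi_SO3 | apply: SO3_tr].
- exact: halfturn_notZ2.
set e := act2 (Rz c s)^T (b k); have eT : e^T = e by rewrite act2_tr bT.
have e01 : e i0 i1 = 0.
  apply: (commute_diag3_01 (z := z) _ xy).
  by have := act2_comm (SO3_tr RzSO) (bcomm k l); rewrite -/e blE (act2K RzSO).
rewrite [act2 (Rz c s) (Rxpi R)]/act2 !act2M -/e (block_diag eT (Rz_block _ _ (bblk k)) e01).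
by rewrite Rxpi_fix_diag3 -(block_diag eT (Rz_block _ _ (bblk k)) e01) act2Kt.
Qed.

Lemma block_crossv_e3 d w : e3_block d -> w i0 = 0 -> w i1 = 0 ->
  crossv (matvec d w) w = zerov R.
Proof. by move=> [d02 d12] w0 w1; apply: vec_ext; simp_vec; rewrite ?d02 ?d12 w0 w1; ring. Qed.

Lemma crossv_eq0_parallel v w : crossv v w = zerov R -> w <> zerov R ->
  v = (fun t => dotv v w / dotv w w * w t).
Proof.
move=> vw /dotv_gt0 /lt0r_neq0 ww; apply: functional_extensionality => t.
have key : dotv w w * v t = dotv v w * w t.
  apply/eqP; rewrite -subr_eq0; apply/eqP.
  have -> : dotv w w * v t - dotv v w * w t = crossv w (crossv v w) t.
    by case: (ord3P t) => ->; simp_vec; ring.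
  by rewrite vw; case: (ord3P t) => ->; simp_vec; ring.
by apply: (mulfI ww); rewrite key; field.
Qed.

Lemma monoclinic_mono_cond n (a : 'I_n -> 'M[R]_3) : (forall k, (a k)^T = a k) ->
  monoclinic a -> mono_cond a.
Proof.
move=> aT /conj_classP [g [gSO symH]]; set b := act2 g^T \o a.
have bT k : (b k)^T = b k by rewrite /b /= act2_tr aT.
rewrite -(act2_famKt a gSO) -/b; apply: mono_cond_act2 => //.
have bblk k : e3_block (b k).
  by apply: fix_Rzpi_block => //; apply: (proj2 ((symH _).2 _)); right.
have [/existsP [i /existsP [j /eqP bij]]|/existsPn bcomm] :=
  boolP [exists i, exists j, b i *m b j != b j *m b i].
  exists i, j => /=; split; first by move/(tr3_cross22_eq0P (bT i) (bT j)).
  have [w0 w1] := tr3_cross22_blocks (bT i) (bT j) (bblk i) (bblk j).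
  by move=> k; apply: block_crossv_e3.
have bc k l : b k *m b l = b l *m b k by have /existsPn/(_ l)/negPn/eqP := bcomm k.
have [m [mSO notZ2 fixm]] := block_extra_symmetry bT bblk bc.
by exfalso; apply: notZ2; apply/symH; split=> // k; apply: fixm.
Qed.

Lemma mono_cond_monoclinic n (a : 'I_n -> 'M[R]_3) : (forall k, (a k)^T = a k) ->
  mono_cond a -> monoclinic a.
Proof.
move=> aT [i [j /= [w0 eigw]]]; set w := tr3 (cross22 (a i) (a j)) in w0 eigw.
have [g [gSO ge3]] := rotation_e3_to_unit (normalize_unit w0).
apply/conj_classP; exists g; split=> //; set b := act2 g^T \o a.
have eig k : matvec (a k) (normalize w) =
    (fun t => dotv (matvec (a k) w) w / dotv w w * normalize w t).
  rewrite /normalize matvecZ {1}(crossv_eq0_parallel (eigw k) w0).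
  by apply: functional_extensionality => t /=; ring.
have bsym k : (b k)^T = b k /\ e3_block (b k).
  have := eigen_e3_block (l := dotv (matvec (a k) w) w / dotv w w) gSO (aT k).
  by rewrite ge3 => /(_ (eig k)).
apply: (Z2_stabilizer (i := i) (j := j)) => [k|k|bij]; try by have [] := bsym k.
have aE k : a k = act2 g (b k) by rewrite /b /= act2Kt.
apply: w0; apply/(tr3_cross22_eq0P (aT i) (aT j)).
by rewrite (aE i) (aE j) !(act2_mul _ _ gSO) bij.
Qed.

Lemma monoclinicP n (a : 'I_n -> 'M[R]_3) : (forall k, (a k)^T = a k) ->
  monoclinic a <-> mono_cond a.
Proof. by move=> aT; split; [apply: monoclinic_mono_cond | apply: mono_cond_monoclinic]. Qed.

End Tensors.

Theorem theorem8p6 (R : realType) (n : nat) (a : 'I_n -> 'M[R]_3)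
  (hsym : forall k, (a k)^T = a k) :
  (isotropic a <-> (forall k, dev (a k) = 0))
  /\ (transv_isotropic a <->
        exists j, dev (a j) <> 0 /\ cross22 (a j) (a j *m a j) = zero3 R
                  /\ (forall k, cross22 (a j) (a k) = zero3 R))
  /\ (orthotropic a <->
        (forall k l, tr3 (cross22 (a k) (a l)) = zerov R)
        /\ ((exists j, cross22 (a j) (a j *m a j) <> zero3 R)
            \/ (exists i j, cross22 (a i) (a j) <> zero3 R)))
  /\ (monoclinic a <->
        exists i j, let w := tr3 (cross22 (a i) (a j)) in
          w <> zerov R /\ (forall k, crossv (matvec (a k) w) w = zerov R)).
Proof.
split; first exact: isotropicP.
split; first exact: transv_isotropicP.
split; first exact: orthotropicP.
exact: monoclinicP.
Qed.
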